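(* Let $\mathscr{O}$ be a reduced operad in $\mathbbm{k}$-vector spaces with $\mathscr{O}(1)=\mathbbm{k}$ (generated by the unit), and let $\mu\in\mathscr{O}(2)$ satisfy the right Leibniz condition. Then the image of the functor $\alpha:{\bm{\Sigma}}\text{-mod}\to\mathcal{F}_{\mathscr{O}}$ lies in $\mathcal{F}^\mu_{\mathscr{O}}$. In particular, every simple object of $\mathcal{F}_{\mathscr{O}}$ belongs to $\mathcal{F}^\mu_{\mathscr{O}}$.
   Context: Reduced means $\mathscr{O}(0)=0$. $\mathbf{Cat}\,\mathscr{O}$ is the $\mathbbm{k}$-linear PROP with objects $\mathbb{N}$ and $\mathbf{Cat}\,\mathscr{O}(m,n)=\bigoplus_{f:\{1..m\}\to\{1..n\}}\bigotimes_{i}\mathscr{O}(|f^{-1}(i)|)$, with $\boxplus$ addition on objects; $\mathcal{F}_{\mathscr{O}}$ is the category of $\mathbbm{k}$-linear functors $\mathbf{Cat}\,\mathscr{O}\to\mathbbm{k}$-vector spaces. ${\bm{\Sigma}}$-mod is the category of functors from finite sets and bijections to $\mathbbm{k}$-vector spaces. $\alpha$ sends a ${\bm{\Sigma}}$-module $M$ to the functor $n\mapsto M(n)$ on which $\mathbf{Cat}\,\mathscr{O}(n,n)\cong\mathbbm{k}[\mathfrak{S}_n]$ acts via the $\mathfrak{S}_n$-action and all morphisms in $\mathbf{Cat}\,\mathscr{O}(s,t)$ with $s\ne t$ act by zero (restriction along the augmentation $\mathscr{O}\to I$ to the unit operad). $\delta F(n)=F(n+1)$ with $\xi$ acting by $F(\xi\boxplus\mathrm{Id}_1)$.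 For $1\le i\le n$, $\mu_i(n)\in\mathbf{Cat}\,\mathscr{O}(n+1,n)$ is given by the map $j\mapsto j$ ($j\le n$), $n+1\mapsto i$, identity on singleton fibres and $\mu$ with inputs $(i,n+1)$ on the fibre over $i$; $\widetilde\mu_F(n)=F(\sum_i\mu_i(n)):\delta F(n)\to F(n)$. The right Leibniz condition: for all $n$ and $\nu\in\mathscr{O}(n)$, $\mu\circ(\nu\boxplus\mathrm{Id}_1)=\nu\circ\sum_{i=1}^n\mu_i(n)$ in $\mathscr{O}(n+1)$; under it $\widetilde\mu_F:\delta F\to F$ is natural. $\mathcal{F}^\mu_{\mathscr{O}}$ is the full subcategory of $F$ with $\widetilde\mu_F=0$. *)

From HB Require Import structures.
From mathcomp Require Import all_boot all_order all_algebra all_fingroup.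

Set Implicit Arguments.
Unset Strict Implicit.
Unset Printing Implicit Defensive.

Import GRing.Theory.
Local Open Scope ring_scope.

Section OperadDefs.
Variable k : fieldType.

Definition fibS m n (f : {ffun 'I_m -> 'I_n}) (i : 'I_n) : {set 'I_m} :=
  [set x | f x == i].
Definition fibc m n (f : {ffun 'I_m -> 'I_n}) (i : 'I_n) : nat := #|fibS f i|.

Definition compf m n p (g : {ffun 'I_n -> 'I_p}) (f : {ffun 'I_m -> 'I_n})
  : {ffun 'I_m -> 'I_p} := [ffun x => g (f x)].

Definition idf n : {ffun 'I_n -> 'I_n} := [ffun x => x].

(* For f : m -> n, g : n -> p and c : 'I_p, the restriction of f to
   (g o f)^{-1}(c) -> g^{-1}(c), both fibres being identified with
   ordinals via their increasing enumerations. *)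
Lemma restr_lt m n p (f : {ffun 'I_m -> 'I_n}) (g : {ffun 'I_n -> 'I_p})
  (c : 'I_p) (t : 'I_(fibc (compf g f) c)) :
  (index (f (enum_val (A := fibS (compf g f) c) t)) (enum (fibS g c))
     < fibc g c)%N.
Proof.
rewrite /fibc cardE index_mem mem_enum.
have := enum_valP t; rewrite !inE /compf ffunE; exact.
Qed.

Definition restr m n p (f : {ffun 'I_m -> 'I_n}) (g : {ffun 'I_n -> 'I_p})
  (c : 'I_p) : {ffun 'I_(fibc (compf g f) c) -> 'I_(fibc g c)} :=
  [ffun t => Ordinal (@restr_lt m n p f g c t)].

(* transport between arities (identity when a = b, which is always
   the case where it is used; 0 otherwise) *)
Definition ocast (V : nat -> lmodType k) (a b : nat) (x : V a) : V b :=
  match a =P b with ReflectT e => ecast i (V i) e x | ReflectF _ => 0 end.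
Arguments ocast V a b x : clear implicits.

(* A (symmetric) operad in k-vector spaces, presented by its composition
   along arbitrary maps f : m -> n of finite (ordered) sets:
     ogam f nu (nu_i)_i  =  nu with nu_i plugged into its i-th input,
   the inputs of nu_i being labelled by f^{-1}(i) in increasing order,
   so that the result has inputs 'I_m. *)
Record operad := Operad {
  ob : nat -> lmodType k;
  ounit : ob 1;
  ogam : forall m n (f : {ffun 'I_m -> 'I_n}),
           ob n -> (forall i, ob (fibc f i)) -> ob m
}.
Arguments ogam {o m n}.

(* composition of decorated maps, i.e. composition in Cat O:
   (g, nu') o (f, nu) = (g o f, dcomp f g nu' nu) *)
Definition dcomp (O : operad) m n p (f : {ffun 'I_m -> 'I_n})
  (g : {ffun 'I_n -> 'I_p}) (nu' : forall c, ob O (fibc g c))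
  (nu : forall i, ob O (fibc f i)) : forall c, ob O (fibc (compf g f) c) :=
  fun c => ogam (restr f g c) (nu' c)
    (fun j => ocast (ob O) _ _ (nu (enum_val (A := fibS g c) j))).

(* the identity of n in Cat O: identity map decorated by units *)
Definition udec (O : operad) n : forall i, ob O (fibc (idf n) i) :=
  fun i => ocast (ob O) 1 _ (ounit O).
Arguments dcomp {O m n p} f g nu' nu.
Arguments udec O n : clear implicits.

Definition is_operad (O : operad) : Prop :=
  [/\
      (forall m n (f : {ffun 'I_m -> 'I_n}) nu (a : k) (x y : ob O n),
         ogam f (a *: x + y) nu = a *: ogam f x nu + ogam f y nu),
      (forall m n (f : {ffun 'I_m -> 'I_n}) (x : ob O n)
              (nu : forall i, ob O (fibc f i)) (i : 'I_n) (a : k)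
              (y z : ob O (fibc f i)),
         ogam f x (@dfwith _ _ nu i (a *: y + z))
           = a *: ogam f x (@dfwith _ _ nu i y) + ogam f x (@dfwith _ _ nu i z)),
      (forall m (f : {ffun 'I_m -> 'I_1}) (nu : forall i, ob O (fibc f i)),
         ogam f (ounit O) nu = ocast (ob O) _ m (nu ord0)),
      (forall n (x : ob O n), ogam (idf n) x (udec O n) = x)
    &
      (forall m n p (f : {ffun 'I_m -> 'I_n}) (g : {ffun 'I_n -> 'I_p})
              (x : ob O p) (nu' : forall c, ob O (fibc g c))
              (nu : forall i, ob O (fibc f i)),
         ogam f (ogam g x nu') nu = ogam (compf g f) x (dcomp f g nu' nu))].

Definition reduced (O : operad) : Prop := forall x : ob O 0, x = 0.

Definition unit_arity1 (O : operad) : Prop :=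
  ounit O <> 0 /\ forall x : ob O 1, exists c : k, x = c *: ounit O.

Definition muf n (i : 'I_n) : {ffun 'I_n.+1 -> 'I_n} :=
  [ffun x => if unlift ord_max x is Some y then y else i].

Definition mudec (O : operad) (mu : ob O 2) n (i : 'I_n)
  : forall j, ob O (fibc (muf i) j) :=
  fun j => if j == i then ocast (ob O) 2 _ mu else ocast (ob O) 1 _ (ounit O).

(* the map n+1 -> 2 underlying nu (+) Id_1 *)
Definition hf n : {ffun 'I_n.+1 -> 'I_2} :=
  [ffun x => if x == ord_max then 1 else 0].

Definition hdec (O : operad) n (nu : ob O n) : forall j, ob O (fibc (hf n) j) :=
  fun j => if j == 0 then ocast (ob O) n _ nu else ocast (ob O) 1 _ (ounit O).

(* mu o (nu (+) Id_1) = nu o sum_i mu_i(n)  in O(n+1) = Cat O(n+1,1) *)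
Definition right_leibniz (O : operad) (mu : ob O 2) : Prop :=
  forall n (nu : ob O n),
    ogam (hf n) mu (hdec nu) = \sum_(i < n) ogam (muf i) nu (mudec mu i).

(* A k-linear functor on Cat O(m,n) = (+)_f (x)_i O(|f^{-1}(i)|) is given by
   its values on decorated maps (f, (nu_i)_i), multilinear in the nu_i. *)
Record rep (O : operad) := Rep {
  fob : nat -> lmodType k;
  fact : forall m n (f : {ffun 'I_m -> 'I_n}),
           (forall i, ob O (fibc f i)) -> fob m -> fob n
}.
Arguments fact {O} r {m n} f _ _.
Arguments fob {O} r _.

Definition is_functor (O : operad) (F : rep O) : Prop :=
  [/\ (forall m n (f : {ffun 'I_m -> 'I_n}) nu (a : k) (x y : fob F m),
         fact F f nu (a *: x + y) = a *: fact F f nu x + fact F f nu y),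
      (forall m n (f : {ffun 'I_m -> 'I_n}) (nu : forall i, ob O (fibc f i))
              (i : 'I_n) (a : k) (y z : ob O (fibc f i)) (x : fob F m),
         fact F f (@dfwith _ _ nu i (a *: y + z)) x
           = a *: fact F f (@dfwith _ _ nu i y) x
             + fact F f (@dfwith _ _ nu i z) x),
      (forall n (x : fob F n), fact F (idf n) (udec O n) x = x)
    & (forall m n p (f : {ffun 'I_m -> 'I_n}) (g : {ffun 'I_n -> 'I_p})
              (nu' : forall c, ob O (fibc g c))
              (nu : forall i, ob O (fibc f i)) (x : fob F m),
         fact F (compf g f) (dcomp f g nu' nu) x
           = fact F g nu' (fact F f nu x))].

(* subobjects of F in F_O = subfunctors *)
Definition subfunctor (O : operad) (F : rep O) (G : forall n, fob F n -> Prop)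
  : Prop :=
  [/\ (forall n, G n 0),
      (forall n (a : k) (x y : fob F n), G n x -> G n y -> G n (a *: x + y))
    & (forall m n (f : {ffun 'I_m -> 'I_n}) nu (x : fob F m),
         G m x -> G n (fact F f nu x))].

Arguments subfunctor {O} F G.

Definition simple_obj (O : operad) (F : rep O) : Prop :=
  (exists n (x : fob F n), x <> 0) /\
  forall G, subfunctor F G ->
    (forall n x, G n x -> x = 0) \/ (forall n x, G n x).

(* mu tilde_F(n) = F(sum_i mu_i(n)) : delta F(n) = F(n+1) -> F(n) *)
Definition mutilde (O : operad) (mu : ob O 2) (F : rep O) n (x : fob F n.+1)
  : fob F n := \sum_(i < n) fact F (muf i) (mudec mu i) x.

Arguments mutilde {O} mu F n x.

Definition in_Fmu (O : operad) (mu : ob O 2) (F : rep O) : Prop :=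
  forall n (x : fob F n.+1), mutilde mu F n x = 0.

Arguments in_Fmu {O} mu F.

Record smod := SMod {
  smob : nat -> lmodType k;
  sma : forall n, 'S_n -> smob n -> smob n
}.

(* functor from finite sets & bijections (skeleton: the 'I_n) *)
Definition is_smod (M : smod) : Prop :=
  [/\ (forall n (s : 'S_n) (a : k) (x y : smob M n),
         sma s (a *: x + y) = a *: sma s x + sma s y),
      (forall n (x : smob M n), sma (1%g : 'S_n) x = x)
    & (forall n (s t : 'S_n) (x : smob M n),
         sma (s * t)%g x = sma t (sma s x))].   (* (s * t)%g = t o s *)

Definition mkperm n (f : {ffun 'I_n -> 'I_n}) : 'S_n :=
  match injectiveP f with ReflectT inj => perm inj | ReflectF _ => 1%g end.

(* action of alpha(M) on Cat O(n,n): a decorated map acts through the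
   augmentation eps : O(1) -> k and the Sigma_n-action when all fibres are
   singletons (i.e. f is a bijection), and by 0 otherwise *)
Definition alpha_sq (O : operad) (eps : ob O 1 -> k) (M : smod) n
  (f : {ffun 'I_n -> 'I_n}) (nu : forall i, ob O (fibc f i)) (x : smob M n)
  : smob M n :=
  if [forall i, fibc f i == 1%N]
  then (\prod_(i < n) eps (ocast (ob O) _ 1 (nu i))) *: sma (mkperm f) x
  else 0.

Definition alpha_act (O : operad) (eps : ob O 1 -> k) (M : smod) m n
  : forall f : {ffun 'I_m -> 'I_n},
      (forall i, ob O (fibc f i)) -> smob M m -> smob M n :=
  match m =P n with
  | ReflectT e =>
      ecast q (forall f : {ffun 'I_q -> 'I_n},
                 (forall i, ob O (fibc f i)) -> smob M q -> smob M n)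
            (esym e) (@alpha_sq O eps M n)
  | ReflectF _ => fun _ _ _ => 0
  end.

Definition alpha (O : operad) (eps : ob O 1 -> k) (M : smod) : rep O :=
  @Rep O (smob M) (@alpha_act O eps M).

End OperadDefs.

(* Every decorated map between different arities acts by zero on alpha(M),
   and each mu_i(n) goes from arity n+1 to arity n, so mu-tilde vanishes on
   alpha(M). That alpha(M) is a functor at all rests on reducedness (a
   decorated map with an empty fibre is zero) and on the augmentation being
   multiplicative on O(1) = k; for a composite m -> n -> m with m < n, some
   fibre of the second map has two points, so the composite decoration
   vanishes.
   For a simple F, the elements killed by every map to a lower arity form a
   subfunctor: a map to a higher arity has an empty fibre, and a map to a
   lower or equal arity followed by a killing map goes to a lower arity. A
   nonzero element of minimal arity lies in it, so it is all of F, and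
   mu-tilde, which lowers the arity, vanishes on F. *)
From HB Require Import structures.
From mathcomp Require Import all_boot all_order all_algebra all_fingroup.
From Stdlib Require Import FunctionalExtensionality.
Set Implicit Arguments.
Unset Strict Implicit.
Unset Printing Implicit Defensive.
Import GRing.Theory.
Local Open Scope ring_scope.

Arguments ocast {k} V a b x.
Arguments ogam {k o m n} f _ _.
Arguments fact {k O} r {m n} f _ _.
Arguments dcomp {k O m n p} f g nu' nu.
Arguments udec {k} O n.
Arguments subfunctor {k O} F G.

Lemma linear_fun0 (k : fieldType) (U V : lmodType k) (f : U -> V) :
  (forall a x y, f (a *: x + y) = a *: f x + f y) -> f 0 = 0.
Proof.
move=> f_lin; have := f_lin 1 0 0; rewrite !scale1r addr0 => f00.
by apply: (addrI (f 0)); rewrite addr0 -f00.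
Qed.

Lemma dfwith_self (I : eqType) (T : I -> Type) (f : forall i, T i) i :
  dfwith f (f i) = f.
Proof. by apply: functional_extensionality_dep => j; case: dfwithP. Qed.

Section Cast.
Variables (k : fieldType) (V : nat -> lmodType k).

Lemma ocast_id a (x : V a) : ocast V a a x = x.
Proof.
by rewrite /ocast; case: eqP => // e; rewrite (eq_irrelevance e erefl).
Qed.

Lemma ocastK a b c (e : a = b) (x : V a) :
  ocast V b c (ocast V a b x) = ocast V a c x.
Proof. by subst b; rewrite ocast_id. Qed.

Lemma ocast_lin a b s (x y : V a) :
  ocast V a b (s *: x + y) = s *: ocast V a b x + ocast V a b y.
Proof.
by rewrite /ocast; case: eqP => [e|_]; [subst b | rewrite scaler0 addr0].
Qed.

Lemma ocast0 a b : ocast V a b 0 = 0.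
Proof. exact: linear_fun0 (@ocast_lin a b). Qed.

End Cast.

Lemma fibc_eq0_lt m q (g : {ffun 'I_m -> 'I_q}) :
  (m < q)%N -> exists i, fibc g i = 0%N.
Proof.
move=> lt_mq.
have /subsetPn [i _ i_img] : ~~ ([set: 'I_q] \subset g @: [set: 'I_m]).
  apply: contraTN lt_mq => /subset_leq_card.
  rewrite cardsT card_ord -leqNgt => /leq_trans; apply.
  by rewrite (leq_trans (leq_imset_card _ _)) // cardsT card_ord.
exists i; apply/eqP; rewrite cards_eq0; apply/eqP/setP => x; rewrite !inE.
by apply: contraNF i_img => /eqP <-; rewrite imset_f.
Qed.

Lemma fibc_le1_inj m n (f : {ffun 'I_m -> 'I_n}) :
  (forall i, fibc f i <= 1)%N -> injective f.
Proof.
move=> le1 x y fxy; have /card_le1_eqP := le1 (f x).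
by apply; rewrite inE ?fxy.
Qed.

Lemma fibc1_injectiveb n (f : {ffun 'I_n -> 'I_n}) :
  [forall i, fibc f i == 1%N] = injectiveb f.
Proof.
apply/forallP/injectiveP => [f1 | f_inj i].
  by apply: fibc_le1_inj => i; rewrite (eqP (f1 i)).
have /codomP [x ->] := injF_onto f_inj i.
rewrite /fibc (_ : fibS f (f x) = [set x]) ?cards1 //.
by apply/setP => y; rewrite !inE (inj_eq f_inj).
Qed.

Lemma fibc_card1 s t (r : {ffun 'I_s -> 'I_t}) j :
  s = 1%N -> t = 1%N -> fibc r j = 1%N.
Proof.
move=> es et; subst s t.
rewrite /fibc (_ : fibS r j = setT) ?cardsT ?card_ord //.
by apply/setP => x; rewrite !inE !ord1.
Qed.

Lemma injectiveb_compf n (f g : {ffun 'I_n -> 'I_n}) :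
  injectiveb (compf g f) = injectiveb f && injectiveb g.
Proof.
apply/injectiveP/andP => [gf_inj | [/injectiveP f_inj /injectiveP g_inj]].
  have f_inj : injective f by move=> x y fxy; apply: gf_inj; rewrite !ffunE fxy.
  split; apply/injectiveP => // y1 y2.
  have [f' fK f'K] := injF_bij f_inj.
  rewrite -(f'K y1) -(f'K y2) => e; apply: (congr1 f).
  by apply: gf_inj; rewrite !ffunE.
by move=> x y; rewrite !ffunE => /g_inj /f_inj.
Qed.

Lemma mkpermE n (f : {ffun 'I_n -> 'I_n}) : injective f -> mkperm f =1 f.
Proof.
by move=> f_inj x; rewrite /mkperm; case: injectiveP => // ?; rewrite permE.
Qed.

Lemma mkperm_compf n (f g : {ffun 'I_n -> 'I_n}) :
  injective f -> injective g -> mkperm (compf g f) = (mkperm f * mkperm g)%g.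
Proof.
move=> f_inj g_inj; have gf_inj : injective (compf g f).
  by move=> x y; rewrite !ffunE => /g_inj /f_inj.
by apply/permP => i; rewrite permM !mkpermE // ffunE.
Qed.

Section ReducedOperad.
Variables (k : fieldType) (O : operad k).
Hypotheses (O_operad : is_operad O) (O_reduced : reduced O).

Lemma ob_arity0 c (y : ob O c) : c = 0%N -> y = 0.
Proof. by move=> c0; subst c; apply: O_reduced. Qed.

Lemma ogam0 m n (f : {ffun 'I_m -> 'I_n}) (nu : forall i, ob O (fibc f i)) :
  ogam f 0 nu = 0.
Proof. by case: O_operad => lin _ _ _ _; exact: linear_fun0 (lin _ _ f nu). Qed.

Lemma ogam_fibc0 m n (f : {ffun 'I_m -> 'I_n}) (x : ob O n) nu i :
  fibc f i = 0%N -> ogam f x nu = 0.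
Proof.
move=> fi0; rewrite -(dfwith_self nu i) (ob_arity0 (nu i) fi0).
by case: O_operad => _ lin _ _ _; exact: linear_fun0 (lin _ _ f x nu i).
Qed.

Lemma dcomp_eq0 m n p (f : {ffun 'I_m -> 'I_n}) (g : {ffun 'I_n -> 'I_p})
  (nu' : forall c, ob O (fibc g c)) nu c :
  (fibc (compf g f) c < fibc g c)%N -> dcomp f g nu' nu c = 0.
Proof.
by move=> /(fibc_eq0_lt (restr f g c)) [j rj0]; exact: ogam_fibc0 rj0.
Qed.

End ReducedOperad.

Section LinearFunctor.
Variables (k : fieldType) (O : operad k) (F : rep O).
Hypotheses (F_functor : is_functor F) (O_reduced : reduced O).

Lemma fact0 m n (f : {ffun 'I_m -> 'I_n}) nu : fact F f nu 0 = 0.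
Proof. by case: F_functor => lin _ _ _; exact: linear_fun0 (lin _ _ f nu). Qed.

Lemma fact_fibc0 m n (f : {ffun 'I_m -> 'I_n}) nu (x : fob F m) i :
  fibc f i = 0%N -> fact F f nu x = 0.
Proof.
move=> fi0; rewrite -(dfwith_self nu i) (ob_arity0 O_reduced (nu i) fi0).
case: F_functor => _ lin _ _.
exact: linear_fun0 (fun a y z => lin _ _ f nu i a y z x).
Qed.

Definition killed_by_lower n (x : fob F n) : Prop :=
  forall p (f : {ffun 'I_n -> 'I_p}) nu, (p < n)%N -> fact F f nu x = 0.

Lemma killed_by_lower_subfunctor : subfunctor F killed_by_lower.
Proof.
case: (F_functor) => lin _ _ comp; split.
- by move=> n p f nu _; rewrite fact0.
- by move=> n a x y kx ky p f nu lt_pn; rewrite lin kx // ky // scaler0 addr0.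
move=> m n f nu x kx p h nu' lt_pn; have [lt_mn | le_nm] := ltnP m n.
  by have [i fi0] := fibc_eq0_lt f lt_mn; rewrite (fact_fibc0 _ _ fi0) fact0.
by rewrite -comp kx // (leq_trans lt_pn le_nm).
Qed.

End LinearFunctor.

Lemma simple_in_Fmu (k : fieldType) (O : operad k) (mu : ob O 2) (F : rep O) :
  reduced O -> is_functor F -> simple_obj F -> in_Fmu mu F.
Proof.
move=> O_reduced F_functor [[n0 [x0 x0_neq0]] F_simple].
have := F_simple _ (killed_by_lower_subfunctor F_functor O_reduced).
case=> [kill0 | kill_all]; last by move=> n x; apply: big1 => i _; apply: kill_all.
case: x0_neq0; elim/ltn_ind: n0 x0 => n IH x.
by apply: kill0 => p f nu lt_pn; apply: IH.
Qed.

Section Alpha.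
Variables (k : fieldType) (O : operad k) (eps : ob O 1 -> k) (M : smod k).
Hypotheses (O_operad : is_operad O) (O_reduced : reduced O) (O1 : unit_arity1 O).
Hypotheses (eps_unit : eps (ounit O) = 1)
  (eps_lin : forall (a : k) (x y : ob O 1), eps (a *: x + y) = a * eps x + eps y).
Hypothesis M_smod : is_smod M.

Definition aug m n (f : {ffun 'I_m -> 'I_n}) (nu : forall i, ob O (fibc f i))
  : k :=
  \prod_(i < n) eps (ocast (ob O) _ 1 (nu i)).
Arguments aug {m n} f nu.

Lemma eps0 : eps 0 = 0.
Proof. exact: (linear_fun0 (V := k^o) eps_lin). Qed.

Lemma sma0 n (s : 'S_n) : sma s (0 : smob M n) = 0.
Proof. by case: M_smod => lin _ _; exact: linear_fun0 (lin n s). Qed.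

Lemma smaZ n (s : 'S_n) a (x : smob M n) : sma s (a *: x) = a *: sma s x.
Proof. by case: M_smod => lin _ _; rewrite -[a *: x]addr0 lin sma0 addr0. Qed.

Lemma alpha_actE n (f : {ffun 'I_n -> 'I_n}) nu x :
  fact (alpha eps M) f nu x
  = if injectiveb f then aug f nu *: sma (mkperm f) x else 0.
Proof.
rewrite /= /alpha_act; case: eqP => // e.
by rewrite (eq_irrelevance e erefl) /= /alpha_sq fibc1_injectiveb.
Qed.

Lemma alpha_actN m n (f : {ffun 'I_m -> 'I_n}) nu x :
  m != n -> fact (alpha eps M) f nu x = 0.
Proof. by move=> /eqP nmn; rewrite /= /alpha_act; case: eqP. Qed.

Lemma alpha0 m n (f : {ffun 'I_m -> 'I_n}) nu : fact (alpha eps M) f nu 0 = 0.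
Proof.
have [e | ] := eqVneq m n; last exact: alpha_actN.
by subst m; rewrite alpha_actE sma0 scaler0 if_same.
Qed.

Lemma aug_dfwith m n (f : {ffun 'I_m -> 'I_n}) nu i (w : ob O (fibc f i)) :
  aug f (dfwith nu w) =
  eps (ocast (ob O) _ 1 w) * \prod_(j < n | j != i) eps (ocast (ob O) _ 1 (nu j)).
Proof.
rewrite /aug (bigD1 i) //= dfwith_in; congr (_ * _).
by apply: eq_bigr => j ji; rewrite dfwith_out // eq_sym.
Qed.

Lemma eps_ogam1 s t (r : {ffun 'I_s -> 'I_t}) (a : ob O t)
  (b : forall j, ob O (fibc r j)) j :
  s = 1%N -> t = 1%N ->
  eps (ocast (ob O) s 1 (ogam r a b))
  = eps (ocast (ob O) t 1 a) * eps (ocast (ob O) _ 1 (b j)).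
Proof.
move=> es et; subst s t; rewrite !ocast_id (ord1 j).
have [c ->] := O1.2 a; rewrite -[c *: ounit O]addr0.
case: (O_operad) => lin _ unitl _ _.
by rewrite lin ogam0 // unitl !eps_lin eps_unit eps0 !addr0 mulr1.
Qed.

Lemma aug_dcomp n (f g : {ffun 'I_n -> 'I_n}) nu' nu :
  injective f -> injective g ->
  aug (compf g f) (dcomp f g nu' nu) = aug g nu' * aug f nu.
Proof.
move=> f_inj g_inj.
have fib1 (h : {ffun 'I_n -> 'I_n}) : injective h -> forall c, fibc h c = 1%N.
  by move=> /injectiveP; rewrite -fibc1_injectiveb => /forallP h1 c; apply/eqP.
have gf_inj : injective (compf g f).
  by move=> x y; rewrite !ffunE => /g_inj /f_inj.
rewrite /aug [X in _ = _ * X](partition_big g xpredT) //= -big_split /=.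
apply: eq_bigr => c _.
have j : 'I_(fibc g c) by rewrite fib1 //; exact: ord0.
have gj : g (enum_val j) = c by have := enum_valP j; rewrite inE => /eqP.
rewrite /dcomp (eps_ogam1 _ _ j (fib1 _ gf_inj c) (fib1 _ g_inj c)).
congr (_ * _).
have fj : fibc f (enum_val j) = fibc (restr f g c) j.
  by rewrite fib1 // (fibc_card1 _ j (fib1 _ gf_inj c) (fib1 _ g_inj c)).
rewrite (ocastK _ fj) (big_pred1 (enum_val j)) // => i /=.
by rewrite -{1}gj (inj_eq g_inj).
Qed.

Lemma alpha_act_detour m n (f : {ffun 'I_m -> 'I_n}) (g : {ffun 'I_n -> 'I_m})
  nu' nu x :
  m != n -> fact (alpha eps M) (compf g f) (dcomp f g nu' nu) x = 0.
Proof.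
move=> nmn; rewrite alpha_actE; case: ifP => // gf_injb.
have f_inj : injective f.
  by move=> y z fyz; apply: (injectiveP _ gf_injb); rewrite !ffunE fyz.
have lt_mn : (m < n)%N.
  by rewrite ltn_neqAle nmn -{1}(card_ord m) -(card_ord n) (leq_card _ f_inj).
have [c gc] : exists c, (1 < fibc g c)%N.
  case: (pickP (fun c => 1 < fibc g c)%N) => [c gc | g_le1]; first by exists c.
  have /leq_card : injective g by apply: fibc_le1_inj => c; rewrite leqNgt g_le1.
  by rewrite !card_ord leqNgt lt_mn.
have gfc : fibc (compf g f) c = 1%N.
  by move: gf_injb; rewrite -fibc1_injectiveb => /forallP/(_ c)/eqP.
by rewrite /aug (bigD1 c) //= dcomp_eq0 ?gfc // ocast0 eps0 mul0r scale0r.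
Qed.

Lemma alpha_act_comp_sq n (f g : {ffun 'I_n -> 'I_n}) nu' nu x :
  fact (alpha eps M) (compf g f) (dcomp f g nu' nu) x
  = fact (alpha eps M) g nu' (fact (alpha eps M) f nu x).
Proof.
rewrite !alpha_actE injectiveb_compf.
have [/injectiveP f_inj | _] := boolP (injectiveb f); last first.
  by rewrite sma0 scaler0 if_same.
have [/injectiveP g_inj | //] := boolP (injectiveb g).
case: (M_smod) => _ _ smaM.
by rewrite aug_dcomp // mkperm_compf // smaM smaZ scalerA.
Qed.

Lemma alpha_act_id n (x : fob (alpha eps M) n) :
  fact (alpha eps M) (idf n) (udec O n) x = x.
Proof.
have id_inj : injectiveb (idf n) by apply/injectiveP => y z; rewrite !ffunE.
have id1 i : fibc (idf n) i = 1%N.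
  by move: id_inj; rewrite -fibc1_injectiveb => /forallP/(_ i)/eqP.
rewrite alpha_actE id_inj /aug big1 => [|i _]; last first.
  by rewrite /udec (ocastK _ (esym (id1 i))) ocast_id eps_unit.
have -> : mkperm (idf n) = 1%g.
  by apply/permP => i; rewrite mkpermE ?perm1 ?ffunE //; exact/injectiveP.
by case: M_smod => _ sma1 _; rewrite scale1r sma1.
Qed.

Lemma alpha_act_comp m n p (f : {ffun 'I_m -> 'I_n}) (g : {ffun 'I_n -> 'I_p})
  nu' nu x :
  fact (alpha eps M) (compf g f) (dcomp f g nu' nu) x
  = fact (alpha eps M) g nu' (fact (alpha eps M) f nu x).
Proof.
have [emp | nmp] := eqVneq m p; last first.
  rewrite alpha_actN //; have [emn | nmn] := eqVneq m n; last first.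
    by rewrite (alpha_actN _ _ nmn) alpha0.
  by subst n; rewrite alpha_actN.
subst p; have [emn | nmn] := eqVneq m n; last first.
  by rewrite alpha_act_detour // (alpha_actN _ _ nmn) alpha0.
by subst n; exact: alpha_act_comp_sq.
Qed.

Lemma alpha_functor : is_functor (alpha eps M).
Proof.
split; [| | exact: alpha_act_id | exact: alpha_act_comp].
- move=> m n f nu a x y; have [e | nmn] := eqVneq m n; last first.
    by rewrite !alpha_actN // scaler0 addr0.
  subst m; rewrite !alpha_actE; case: ifP => _; last by rewrite scaler0 addr0.
  by case: (M_smod) => lin _ _; rewrite lin scalerDr !scalerA mulrC.
- move=> m n f nu i a y z x; have [e | nmn] := eqVneq m n; last first.
    by rewrite !alpha_actN // scaler0 addr0.
  subst m; rewrite !alpha_actE; case: ifP => _; last by rewrite scaler0 addr0.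
  by rewrite !aug_dfwith ocast_lin eps_lin mulrDl !scalerDl !scalerA mulrA.
Qed.

End Alpha.

Lemma alpha_in_Fmu (k : fieldType) (O : operad k) (mu : ob O 2)
  (eps : ob O 1 -> k) (M : smod k) : in_Fmu mu (alpha eps M).
Proof. by move=> n x; apply: big1 => i _; rewrite alpha_actN // gtn_eqF. Qed.

Theorem proposition3p9 (k : fieldType) (O : operad k) (mu : ob O 2)
  (eps : ob O 1 -> k) :
  is_operad O -> reduced O -> unit_arity1 O -> right_leibniz mu ->
  (* eps is the augmentation O(1) = k -> k *)
  eps (ounit O) = 1 ->
  (forall (a : k) (x y : ob O 1), eps (a *: x + y) = a * eps x + eps y) ->
  (forall M : smod k, is_smod M ->
     is_functor (alpha eps M) /\ in_Fmu mu (alpha eps M)) /\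
  (forall F : rep O, is_functor F -> simple_obj F -> in_Fmu mu F).
Proof.
move=> O_operad O_reduced O1 _ eps_unit eps_lin; split.
  by move=> M M_smod; split; [exact: alpha_functor | exact: alpha_in_Fmu].
by move=> F; exact: simple_in_Fmu.
Qed.
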